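(* Let $Q=Q^+(5,q)$ be the non-degenerate hyperbolic quadric in $\mathrm{PG}(5,q)$ with associated polarity $\perp$, and let $\ell$ be a line of $\mathrm{PG}(5,q)$ disjoint from $Q$. Let $S$ be a line spread of the solid $\ell^\perp$. For every line $m\in S$, let $\mathcal{F}_m$ be the set of lines of $Q$ contained in the solid $\langle m,\ell\rangle$, and let $\mathcal{F}=\bigcup_{m\in S}\mathcal{F}_m$. Then $\mathcal{F}$ is a $(3,2)$-ovoid of $Q$, i.e. every plane contained in $Q$ contains precisely one line of $\mathcal{F}$.
   Context: Projective terminology is used: points, lines, planes and solids of $\mathrm{PG}(5,q)$ are subspaces of projective dimension $0,1,2,3$ (vector dimensions $1,2,3,4$). A line spread of a solid is a set of lines of the solid partitioning its points. The polarity $\perp$ is the one induced by the bilinear form associated to the quadratic form defining $Q$. The generators of $Q^+(5,q)$ are the planes contained in $Q$; a $(3,2)$-ovoid is a set of lines of $Q$ such that each such plane contains exactly one of them. *)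

(* Projective space PG(5,q) = subspaces of 'rV[F]_6, F a finite
   field; a subspace is represented by a square matrix (its row space). *)
From HB Require Import structures.
From mathcomp Require Import all_boot all_order all_algebra.
Set Implicit Arguments. Unset Strict Implicit. Unset Printing Implicit Defensive.
Import GRing.Theory.
Local Open Scope ring_scope.

Section Quadric.
Variable F : finFieldType.

(* Gram-type matrix of the standard hyperbolic form x0x1 + x2x3 + x4x5 *)
Definition hypM0 : 'M[F]_6 :=
  \matrix_(i, j) (odd j && (nat_of_ord j == (nat_of_ord i).+1))%:R.

(* The hyperbolic quadratic form transported by a change of coordinates A:
   Q_A(x) = std(x A).  Every non-degenerate hyperbolic quadric Q^+(5,q) is
   the zero set of Q_A for some invertible A. *)
Definition hypQ (A : 'M[F]_6) (x : 'rV[F]_6) : F :=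
  ((x *m A) *m hypM0 *m (x *m A)^T) 0 0.

Definition polB (A : 'M[F]_6) (x y : 'rV[F]_6) : F :=
  hypQ A (x + y) - hypQ A x - hypQ A y.

(* projective subspaces by projective dimension = rank - 1 *)
Definition is_line (U : 'M[F]_6) : bool := \rank U == 2%N.
Definition is_plane (U : 'M[F]_6) : bool := \rank U == 3%N.

Definition in_quadric (A : 'M[F]_6) (U : 'M[F]_6) : Prop :=
  forall v : 'rV[F]_6, (v <= U)%MS -> hypQ A v = 0.

Definition disjoint_quadric (A : 'M[F]_6) (U : 'M[F]_6) : Prop :=
  forall v : 'rV[F]_6, v != 0 -> (v <= U)%MS -> hypQ A v != 0.

Definition in_perp (A : 'M[F]_6) (U : 'M[F]_6) (v : 'rV[F]_6) : Prop :=
  forall u : 'rV[F]_6, (u <= U)%MS -> polB A v u = 0.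

Definition line_spread_of_perp (A : 'M[F]_6) (l : 'M[F]_6)
    (S : {set 'M[F]_6}) : Prop :=
  (forall m, m \in S -> is_line m /\ forall v, (v <= m)%MS -> in_perp A l v) /\
  (forall v : 'rV[F]_6, v != 0 -> in_perp A l v ->
     #|[set m in S | (v <= m)%MS]| = 1%N).

Definition in_family (A : 'M[F]_6) (l : 'M[F]_6) (S : {set 'M[F]_6})
    (L : 'M[F]_6) : Prop :=
  is_line L /\ in_quadric A L /\ exists2 m, m \in S & (L <= m + l)%MS.

End Quadric.

From HB Require Import structures.
From mathcomp Require Import all_boot all_order all_algebra.
From mathcomp Require Import ring zify.
(* Non-degeneracy makes [W := l^perp] a solid, and since [l] is anisotropic
   (in characteristic 2 because squaring is onto a finite field) [W :&: l = 0],
   so [W (+) l] is the whole space.  Of the plane [P] only [P :&: l = 0] is used: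
   [P + l] is a hyperplane, it meets [W] in a plane, and counting nonzero vectors
   shows that every plane of [W] contains a line [m] of the spread; then
   [P :&: (m + l)] is a line of [P] in the solid [<m, l>].  Conversely a line of
   [P] in [<m, l>] forces [m <= P + l], and two distinct, hence disjoint, spread
   lines in [P + l] would span [W], putting [W + l] inside the hyperplane [P + l]. *)

Set Implicit Arguments. Unset Strict Implicit. Unset Printing Implicit Defensive.
Import GRing.Theory.
Local Open Scope ring_scope.

Section Counting.
Variables (F : finFieldType) (n : nat).

Lemma card_submx_rV (U : 'M[F]_n) :
  #|[set v : 'rV[F]_n | (v <= U)%MS]| = (#|F| ^ \rank U)%N.
Proof.
have base_inj : injective (fun w : 'rV[F]_(\rank U) => w *m row_base U).
  by apply: row_free_inj; rewrite row_base_free.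
have -> : [set v : 'rV[F]_n | (v <= U)%MS] =
          [set w *m row_base U | w in [set: 'rV[F]_(\rank U)]].
  apply/setP => v; rewrite inE -(eq_row_base U); apply/idP/imsetP.
    by case/submxP=> w ->; exists w; rewrite ?inE.
  by case=> w _ ->; apply: submxMl.
by rewrite card_imset // cardsT card_mx mul1n.
Qed.

Definition nzvecs (U : 'M[F]_n) := [set v : 'rV[F]_n | (v != 0) && (v <= U)%MS].

Lemma card_nzvecs U : #|nzvecs U| = (#|F| ^ \rank U).-1.
Proof.
rewrite -card_submx_rV [in RHS](cardsD1 0) inE sub0mx add1n /=.
by apply: eq_card => v; rewrite !inE andbC.
Qed.

End Counting.

Section Spread.
Variables (F : finFieldType) (n : nat) (W : 'M[F]_n) (S : {set 'M[F]_n}).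
Hypothesis S_cover : forall v : 'rV[F]_n, v != 0 -> (v <= W)%MS ->
  #|[set m in S | (v <= m)%MS]| = 1%N.

Lemma card_nzvecs_partition X : (X <= W)%MS ->
  #|nzvecs X| = (\sum_(m in S) #|nzvecs (m :&: X)%MS|)%N.
Proof.
move=> sXW; rewrite -sum1_card.
rewrite (eq_bigr (fun v => \sum_(m in S | (v <= m)%MS) 1)%N); last first.
  move=> v /[!inE] /andP[nz_v svX].
  by rewrite sum1dep_card S_cover // (submx_trans svX sXW).
rewrite (exchange_big_dep (mem S)) /=; last by move=> v m _ /andP[].
apply: eq_bigr => m Sm; rewrite sum1dep_card.
by apply: eq_card => v; rewrite !inE sub_capmx Sm /= andbAC andbA.
Qed.

Lemma spread_eq m1 m2 (v : 'rV[F]_n) : m1 \in S -> m2 \in S -> (m1 <= W)%MS ->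
  v != 0 -> (v <= m1)%MS -> (v <= m2)%MS -> m1 = m2.
Proof.
move=> Sm1 Sm2 sm1W nz_v svm1 svm2.
have /eqP/cards1P[m0 Sv] := S_cover nz_v (submx_trans svm1 sm1W).
have : m1 \in [set m0] by rewrite -Sv inE Sm1.
have : m2 \in [set m0] by rewrite -Sv inE Sm2.
by rewrite !inE => /eqP-> /eqP->.
Qed.

Hypothesis S_lines : forall m, m \in S -> \rank m = 2%N /\ (m <= W)%MS.
Hypothesis rank_W : \rank W = 4%N.

(* [q^3 - 1 = #|S| (q - 1)] and [q^4 - 1 = #|S| (q^2 - 1)] cannot both hold. *)
Lemma spread_line_sub_plane (T : 'M[F]_n) : (T <= W)%MS -> \rank T = 3%N ->
  exists2 m, m \in S & (m <= T)%MS.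
Proof.
move=> sTW rank_T.
case: (pickP [pred m | (m \in S) && (m <= T)%MS]) => [m /andP[]|none]; first by exists m.
have rank_cap m : m \in S -> \rank (m :&: T)%MS = 1%N.
  move=> Sm; have [rank_m smW] := S_lines Sm.
  have not_smT : ~~ (m <= T)%MS by apply/negP => smT; have := none m; rewrite /= Sm smT.
  have : (\rank (m :&: T)%MS < \rank m)%N.
    rewrite ltn_neqAle (mxrank_leqif_sup (capmxSl m T)) sub_capmx submx_refl.
    by rewrite not_smT mxrankS ?capmxSl.
  have : (\rank (m + T)%MS <= 4)%N by rewrite -rank_W mxrankS // addsmx_sub smW.
  by have := mxrank_sum_cap m T; rewrite rank_m rank_T; lia.
have card_cap (X : 'M[F]_n) k : (X <= W)%MS -> (forall m, m \in S -> \rank (m :&: X)%MS = k) ->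
    ((#|F| ^ \rank X).-1 = #|S| * (#|F| ^ k).-1)%N.
  move=> sXW rank_mX; rewrite -card_nzvecs card_nzvecs_partition // -sum_nat_const.
  by apply: eq_bigr => m Sm; rewrite card_nzvecs rank_mX.
have rank_capW m : m \in S -> \rank (m :&: W)%MS = 2%N.
  by move=> Sm; have [<- smW] := S_lines Sm; rewrite (capmx_idPl smW).
have := card_cap W 2%N (submx_refl W) rank_capW.
have := card_cap T 1%N sTW rank_cap.
have := card_finNzRing_gt1 F.
rewrite rank_W rank_T; set q := #|F|; rewrite !expnS expn0 !muln1.
nia.
Qed.
End Spread.

Section QuadraticForm.
Variables (F : fieldType) (n : nat) (G : 'M[F]_n).
Implicit Types (x y v : 'rV[F]_n) (a : F).

Definition qform x : F := (x *m G *m x^T) 0 0.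
Definition polar_mx : 'M[F]_n := G + G^T.
Definition qpolar x y : F := (x *m polar_mx *m y^T) 0 0.

Lemma qform_tr x y : (y *m G *m x^T) 0 0 = (x *m G^T *m y^T) 0 0.
Proof.
have -> : y *m G *m x^T = (x *m G^T *m y^T)^T by rewrite !trmx_mul !trmxK mulmxA.
by rewrite mxE.
Qed.

Lemma qformD x y : qform (x + y) = qform x + qform y + qpolar x y.
Proof.
have entryD (M N : 'M[F]_1) : (M + N) 0 0 = M 0 0 + N 0 0 by rewrite mxE.
rewrite /qform /qpolar /polar_mx linearD /= !(mulmxDl, mulmxDr) !entryD.
by rewrite [(y *m G *m x^T) 0 0]qform_tr; ring.
Qed.

Lemma qformZ a x : qform (a *: x) = a ^+ 2 * qform x.
Proof. by rewrite /qform linearZ /= -!scalemxAl -scalemxAr scalerA mxE expr2. Qed.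

Lemma qpolarZl a x y : qpolar (a *: x) y = a * qpolar x y.
Proof. by rewrite /qpolar -!scalemxAl mxE. Qed.

Lemma qpolar_diag x : qpolar x x = 2%:R * qform x.
Proof. by rewrite /qpolar /polar_mx mulmxDr mulmxDl mxE -qform_tr mulr_natl mulr2n. Qed.

Definition perp_mx m (U : 'M[F]_(m, n)) : 'M[F]_n := kermx (polar_mx *m U^T).

Lemma sub_perp_mxP m (U : 'M[F]_(m, n)) v :
  reflect (forall u, (u <= U)%MS -> qpolar v u = 0) (v <= perp_mx U)%MS.
Proof.
rewrite sub_kermx; apply: (iffP eqP) => [v_ker u /submxP[w ->] | v_perp].
  by rewrite /qpolar trmx_mul mulmxA -(mulmxA v) v_ker mul0mx mxE.
apply/rowP => j; rewrite [RHS]mxE -(v_perp _ (row_sub j U)) /qpolar.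
by rewrite tr_row colE !mulmxA -colE !mxE.
Qed.

Lemma mxrank_perp m (U : 'M[F]_(m, n)) :
  polar_mx \in unitmx -> \rank (perp_mx U) = (n - \rank U)%N.
Proof.
move=> polar_unit; rewrite mxrank_ker -mxrank_tr trmx_mul trmxK mxrankMfree //.
by rewrite row_free_unit unitmx_tr.
Qed.

End QuadraticForm.

Lemma pchar2_sqrr_onto (F : finFieldType) (y : F) :
  2 \in [pchar F] -> exists x : F, x ^+ 2 = y.
Proof.
move=> pchar2; have /codomP[x ->] := injF_onto (fmorph_inj (pFrobenius_aut pchar2)) y.
by exists x.
Qed.

Lemma anisotropic_cap_perp (F : finFieldType) (n : nat) (G U : 'M[F]_n) :
  (1 < \rank U)%N -> (forall v, v != 0 -> (v <= U)%MS -> qform G v != 0) ->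
  (U :&: perp_mx G U)%MS = 0.
Proof.
move=> rank_U aniso; apply/eqP/rowV0P => v.
rewrite sub_capmx => /andP[svU /sub_perp_mxP v_perp].
apply/eqP/negPn/negP => nz_v; have Qv_nz := aniso v nz_v svU.
(* [v] is isotropic for the polar form yet [qform G v != 0], so the characteristic
   is 2; then [qform G (x *: v + row i U)] vanishes for a suitable square root [x]. *)
have pchar2 : 2 \in [pchar F].
  have := v_perp v svU; rewrite qpolar_diag => /eqP; rewrite mulf_eq0 (negbTE Qv_nz) orbF.
  by rewrite inE.
have /row_subPn[i not_svb] : ~~ (U <= v)%MS.
  by apply/negP => /mxrankS; rewrite leqNgt (leq_trans _ rank_U) // ltnS rank_leq_row.
have [x x2] := pchar2_sqrr_onto (- qform G (row i U) / qform G v) pchar2.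
have nz_w : x *: v + row i U != 0.
  by apply: contra not_svb; rewrite addrC addr_eq0 => /eqP->; rewrite -scaleNr scalemx_sub.
have /aniso := nz_w; rewrite addmx_sub ?scalemx_sub ?row_sub // => /(_ isT)/negP; apply.
by rewrite qformD qformZ qpolarZl v_perp ?row_sub // mulr0 addr0 x2 divfK // addNr.
Qed.

Section HyperbolicForm.
Variable F : finFieldType.
Implicit Types (A l : 'M[F]_6) (x y v : 'rV[F]_6).

Definition hyp_gram A : 'M[F]_6 := A *m hypM0 F *m A^T.

Lemma hypQE A x : hypQ A x = qform (hyp_gram A) x.
Proof. by rewrite /hypQ /qform /hyp_gram trmx_mul !mulmxA. Qed.

Lemma polBE A x y : polB A x y = qpolar (hyp_gram A) x y.
Proof. by rewrite /polB !hypQE qformD; ring. Qed.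

Lemma in_perpE A l v : in_perp A l v <-> (v <= perp_mx (hyp_gram A) l)%MS.
Proof.
split=> [v_perp | /sub_perp_mxP v_perp u su]; last by rewrite polBE v_perp.
by apply/sub_perp_mxP => u su; rewrite -polBE v_perp.
Qed.

Lemma polar_hypM0_invol :
  (hypM0 F + (hypM0 F)^T) *m (hypM0 F + (hypM0 F)^T) = 1%:M.
Proof.
apply/matrixP => i j; rewrite !mxE !big_ord_recr big_ord0 /= !mxE.
by case: i => [[|[|[|[|[|[|i]]]]]] ?] //; case: j => [[|[|[|[|[|[|j]]]]]] ?] //=;
  rewrite ?(mulr0, mul0r, mulr1, add0r, addr0).
Qed.

Lemma polar_hyp_gram_unit A : A \in unitmx -> polar_mx (hyp_gram A) \in unitmx.
Proof.
move=> A_unit; have [polar_unit _] := mulmx1_unit polar_hypM0_invol.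
have -> : polar_mx (hyp_gram A) = A *m (hypM0 F + (hypM0 F)^T) *m A^T.
  by rewrite /polar_mx /hyp_gram !trmx_mul trmxK !mulmxA mulmxDr mulmxDl.
by rewrite !unitmx_mul A_unit polar_unit unitmx_tr.
Qed.

End HyperbolicForm.

Lemma capmxS_eq0 (F : fieldType) (n : nat) (A B C : 'M[F]_n) :
  (A <= B)%MS -> (B :&: C)%MS = 0 -> (A :&: C)%MS = 0.
Proof. by move=> sAB BC0; apply/eqP; rewrite -submx0 -BC0 capmxS. Qed.

Section PlaneMeetsSolids.
Variables (F : finFieldType) (l W P : 'M[F]_6) (S : {set 'M[F]_6}).
Hypotheses (rank_l : \rank l = 2%N) (rank_W : \rank W = 4%N) (W_cap_l : (W :&: l)%MS = 0).
Hypothesis S_lines : forall m, m \in S -> \rank m = 2%N /\ (m <= W)%MS.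
Hypothesis S_cover : forall v : 'rV[F]_6, v != 0 -> (v <= W)%MS ->
  #|[set m in S | (v <= m)%MS]| = 1%N.
Hypotheses (rank_P : \rank P = 3%N) (P_cap_l : (P :&: l)%MS = 0).
Implicit Types m U L : 'M[F]_6.

Lemma mxrank_solid m : m \in S -> \rank (m + l)%MS = 4%N.
Proof.
move=> /S_lines[rank_m smW].
by rewrite mxrank_disjoint_sum ?rank_m ?rank_l // (capmxS_eq0 smW W_cap_l).
Qed.

Lemma mxrank_Pl : \rank (P + l)%MS = 5%N.
Proof. by rewrite mxrank_disjoint_sum ?rank_P ?rank_l. Qed.

Lemma W_not_sub_Pl : ~~ (W <= P + l)%MS.
Proof.
apply/negP => sWPl; have : (W + l <= P + l)%MS by rewrite addsmx_sub sWPl addsmxSr.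
by move/mxrankS; rewrite mxrank_Pl mxrank_disjoint_sum // rank_W rank_l.
Qed.

Lemma mxrank_sub_solid m U : m \in S -> (U <= P)%MS -> (U <= m + l)%MS ->
  (\rank U <= 2)%N.
Proof.
move=> Sm sUP sUml; have : (U + l <= m + l)%MS by rewrite addsmx_sub sUml addsmxSr.
move/mxrankS; rewrite (mxrank_solid Sm) mxrank_disjoint_sum ?(capmxS_eq0 sUP P_cap_l) //.
by rewrite rank_l addn2.
Qed.

Lemma exists_spread_line_sub_Pl : exists2 m, m \in S & (m <= P + l)%MS.
Proof.
set T := (W :&: (P + l))%MS.
have rank_T : \rank T = 3%N.
  have : (\rank T < \rank W)%N.
    rewrite ltn_neqAle (mxrank_leqif_sup (capmxSl _ _)) sub_capmx submx_refl.
    by rewrite W_not_sub_Pl mxrankS ?capmxSl.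
  have := mxrank_sum_cap W (P + l)%MS; have := rank_leq_col (W + (P + l))%MS.
  by rewrite rank_W mxrank_Pl -/T; lia.
have [m Sm smT] := spread_line_sub_plane S_cover S_lines rank_W (capmxSl _ _) rank_T.
by exists m; last exact: submx_trans smT (capmxSr _ _).
Qed.

Lemma spread_line_sub_Pl_uniq m1 m2 : m1 \in S -> m2 \in S ->
  (m1 <= P + l)%MS -> (m2 <= P + l)%MS -> m1 = m2.
Proof.
move=> Sm1 Sm2 sm1Pl sm2Pl.
have [rank_m1 sm1W] := S_lines Sm1; have [rank_m2 sm2W] := S_lines Sm2.
case: (eqVneq (m1 :&: m2)%MS 0) => [m12_0 | /rowV0Pn[v]]; last first.
  rewrite sub_capmx => /andP[svm1 svm2] nz_v.
  exact: (spread_eq S_cover Sm1 Sm2 sm1W nz_v).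
have s12W : (m1 + m2 <= W)%MS by rewrite addsmx_sub sm1W sm2W.
have /eqmxP eq12W : (m1 + m2 == W)%MS.
  by rewrite -(mxrank_leqif_eq s12W) mxrank_disjoint_sum // rank_m1 rank_m2 rank_W.
by case/negP: W_not_sub_Pl; rewrite -eq12W addsmx_sub sm1Pl sm2Pl.
Qed.

Lemma mxrank_plane_cap_solid m : m \in S -> (m <= P + l)%MS ->
  \rank (P :&: (m + l))%MS = 2%N.
Proof.
move=> Sm smPl; apply/eqP; rewrite eqn_leq (mxrank_sub_solid Sm) ?capmxSl ?capmxSr //=.
have : (P + (m + l) <= P + l)%MS by rewrite !addsmx_sub addsmxSl smPl addsmxSr.
move/mxrankS; have := mxrank_sum_cap P (m + l)%MS.
by rewrite rank_P mxrank_solid // mxrank_Pl; lia.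
Qed.

Lemma line_sub_plane_solidE m L : m \in S -> (L <= P)%MS -> (L <= m + l)%MS ->
  \rank L = 2%N -> (L == P :&: (m + l))%MS.
Proof.
move=> Sm sLP sLml rank_L; have sLcap : (L <= P :&: (m + l))%MS by rewrite sub_capmx sLP.
rewrite -(mxrank_leqif_eq sLcap) eqn_leq mxrankS //= rank_L.
by rewrite (mxrank_sub_solid Sm) ?capmxSl ?capmxSr.
Qed.

Lemma line_sub_plane_solid_Pl m L : m \in S -> (L <= P)%MS -> (L <= m + l)%MS ->
  \rank L = 2%N -> (m <= P + l)%MS.
Proof.
move=> Sm sLP sLml rank_L.
have sLlml : (L + l <= m + l)%MS by rewrite addsmx_sub sLml addsmxSr.
have /eqmxP eq_solid : (L + l == m + l)%MS.
  rewrite -(mxrank_leqif_eq sLlml) (mxrank_solid Sm).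
  by rewrite mxrank_disjoint_sum ?(capmxS_eq0 sLP P_cap_l) ?rank_L ?rank_l.
by apply: submx_trans (addsmxSl m l) _; rewrite -eq_solid addsmxS.
Qed.

Lemma exists_line_plane_cap_solid :
  exists2 m, m \in S & \rank (P :&: (m + l))%MS = 2%N.
Proof.
have [m Sm smPl] := exists_spread_line_sub_Pl.
by exists m; last exact: mxrank_plane_cap_solid.
Qed.

Lemma line_plane_cap_solid_uniq m1 m2 L1 L2 : m1 \in S -> m2 \in S ->
  (L1 <= P)%MS -> (L1 <= m1 + l)%MS -> \rank L1 = 2%N ->
  (L2 <= P)%MS -> (L2 <= m2 + l)%MS -> \rank L2 = 2%N -> (L1 == L2)%MS.
Proof.
move=> Sm1 Sm2 sL1P sL1 rank_L1 sL2P sL2 rank_L2.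
have eq_m12 : m1 = m2.
  by apply: spread_line_sub_Pl_uniq; [| | apply: (line_sub_plane_solid_Pl Sm1 sL1P sL1)
                                        | apply: (line_sub_plane_solid_Pl Sm2 sL2P sL2)].
subst m2; apply/eqmxP; apply: eqmx_trans (eqmx_sym _).
  exact/eqmxP/(line_sub_plane_solidE Sm1 sL1P sL1 rank_L1).
exact/eqmxP/(line_sub_plane_solidE Sm2 sL2P sL2 rank_L2).
Qed.

End PlaneMeetsSolids.

Theorem theorem4p7 (F : finFieldType) (A : 'M[F]_6) (l : 'M[F]_6)
    (S : {set 'M[F]_6}) :
  A \in unitmx ->
  is_line l -> disjoint_quadric A l ->
  line_spread_of_perp A l S ->
  forall P : 'M[F]_6, is_plane P -> in_quadric A P ->
    (exists L : 'M[F]_6, in_family A l S L /\ (L <= P)%MS) /\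
    (forall L1 L2 : 'M[F]_6,
        in_family A l S L1 -> (L1 <= P)%MS ->
        in_family A l S L2 -> (L2 <= P)%MS -> (L1 == L2)%MS).
Proof.
move=> A_unit /eqP rank_l l_aniso [S_perp S_cover] P /eqP rank_P P_sing.
set W := perp_mx (hyp_gram A) l.
have rank_W : \rank W = 4%N by rewrite mxrank_perp ?polar_hyp_gram_unit ?rank_l.
have W_cap_l : (W :&: l)%MS = 0.
  by rewrite capmxC anisotropic_cap_perp ?rank_l // => v; rewrite -hypQE; apply: l_aniso.
have S_lines m : m \in S -> \rank m = 2%N /\ (m <= W)%MS.
  move=> /S_perp[/eqP rank_m m_perp]; split=> //.
  by apply/row_subP => i; apply/in_perpE/m_perp/row_sub.
have {}S_cover (v : 'rV[F]_6) :
    v != 0 -> (v <= W)%MS -> #|[set m in S | (v <= m)%MS]| = 1%N.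
  by move=> nz_v /in_perpE; apply: S_cover.
have P_cap_l : (P :&: l)%MS = 0.
  apply/eqP/rowV0P => v; rewrite sub_capmx => /andP[svP svl].
  by apply/eqP/negPn/negP => /l_aniso/(_ svl); rewrite P_sing ?eqxx.
split=> [|L1 L2 [/eqP rank_L1 [_ [m1 Sm1 sL1]]] sL1P [/eqP rank_L2 [_ [m2 Sm2 sL2]]] sL2P].
  have [m Sm rank_L] :=
    exists_line_plane_cap_solid rank_l rank_W W_cap_l S_lines S_cover rank_P P_cap_l.
  exists (P :&: (m + l))%MS; split; last exact: capmxSl.
  split; first by rewrite /is_line rank_L.
  split; first by move=> v /submx_trans/(_ (capmxSl _ _)); apply: P_sing.
  by exists m => //; apply: capmxSr.
exact: (line_plane_cap_solid_uniq rank_l rank_W W_cap_l S_lines S_cover rank_P P_cap_l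
          Sm1 Sm2 sL1P sL1 rank_L1 sL2P sL2 rank_L2).
Qed.
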